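(* Let $\varphi$ be an endomorphism of a periodic abelian group $A$. The following are equivalent: (MF) there is a subgroup $A_0$ of finite index in $A$ on which $\varphi$ acts as a multiplication; (FM) there is a finite $\varphi$-invariant subgroup $A_1$ of $A$ such that $\varphi$ induces a multiplication on $A/A_1$.
   Context: Abelian groups are written additively. On a periodic abelian group, a multiplication is the componentwise action of an element $\alpha=(\alpha_p)_p\in\prod_p\mathbb{Z}_p$ ($\mathbb{Z}_p$ the $p$-adic integers), $\alpha_p$ acting on the $p$-primary component in the natural way. ''$\varphi$ acts as a multiplication on $A_0$'' means $\varphi(a)=\alpha a$ for all $a\in A_0$, for some such $\alpha$. *)

From HB Require Import structures.
From mathcomp Require Import all_boot all_order all_algebra.
Set Implicit Arguments. Unset Strict Implicit. Unset Printing Implicit Defensive.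
Import Order.TTheory GRing.Theory Num.Theory.
Local Open Scope ring_scope.

(* p-adic integers: a p k : int is the residue of alpha_p modulo p^k,
   with compatibility a p (k+1) = a p k mod p^k.  An element of prod_p Z_p
   is such a family for all primes p (values at non-primes are irrelevant). *)
Record Zhat := ZHat {
  zhat_res :> nat -> nat -> int;
  zhat_compat : forall p k : nat, prime p ->
    (((p ^ k)%N)%:Z %| zhat_res p k.+1 - zhat_res p k)%Z }.

Definition periodic (A : zmodType) : Prop :=
  forall a : A, exists n : nat, (0 < n)%N /\ a *+ n = 0.

Definition is_subgroup (A : zmodType) (S : A -> Prop) : Prop :=
  S 0 /\ forall x y, S x -> S y -> S (x - y).

Definition finite_index (A : zmodType) (S : A -> Prop) : Prop :=
  exists s : seq A, forall a : A, exists2 b, b \in s & S (a - b).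

Definition finite_pred (A : zmodType) (S : A -> Prop) : Prop :=
  exists s : seq A, forall x : A, S x <-> x \in s.

(* [mult_mod B alpha a b]: in the quotient A/B (B a subgroup), the coset of
   b equals alpha times the coset of a.  If n > 0 kills a + B, then alpha
   acts on a + B (whose order divides n) as multiplication by any integer m
   congruent to alpha_p modulo p^(v_p(n)) for every prime p (this is the
   componentwise p-adic action, computed via the Chinese remainder theorem). *)
Definition mult_mod (A : zmodType) (B : A -> Prop) (alpha : Zhat) (a b : A)
  : Prop :=
  exists n : nat, (0 < n)%N /\ B (a *+ n) /\
    exists m : int,
      (forall p : nat, prime p ->
         (((p ^ logn p n)%N)%:Z %| m - alpha p (logn p n))%Z) /\
      B (b - a *~ m).

Definition acts_as_mult (A : zmodType) (phi : A -> A) (A0 : A -> Prop) : Prop :=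
  exists alpha : Zhat, forall a, A0 a -> mult_mod (fun x => x = 0) alpha a (phi a).

Definition induces_mult_quot (A : zmodType) (phi : A -> A) (A1 : A -> Prop)
  : Prop :=
  exists alpha : Zhat, forall a, mult_mod A1 alpha a (phi a).

From mathcomp Require Import all_boot all_order all_algebra.
From Stdlib Require Import Classical.
Set Implicit Arguments. Unset Strict Implicit. Unset Printing Implicit Defensive.
Import Order.TTheory GRing.Theory Num.Theory.
Local Open Scope ring_scope.

(* For alpha in prod_p Z_p the multiplication a |-> alpha a of the periodic
   group A is additive and commutes with every endomorphism, so the defect
   delta = phi - alpha is an additive map commuting with phi.  If phi = alpha
   on A0 of finite index, delta vanishes on A0, so its image A1 is finite; it
   is phi-invariant, and phi = alpha modulo A1.  Conversely, if phi = alpha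
   modulo a finite A1, delta takes values in A1, so its kernel A0 has finite
   index, and phi = alpha on A0. *)

Section ZhatResidues.
Variable alpha : Zhat.

Definition zhat_cong (n : nat) (m : int) : bool :=
  all (fun p => ((p ^ logn p n)%N%:Z %| m - alpha p (logn p n))%Z) (primes n).

Lemma zhat_congP n m :
  reflect (forall p, prime p -> ((p ^ logn p n)%N%:Z %| m - alpha p (logn p n))%Z)
          (zhat_cong n m).
Proof.
apply: (iffP allP) => [cong_m p p_pr | cong_m p]; last first.
  by rewrite mem_primes => /andP[/cong_m].
have [/cong_m // | p_n] := boolP (p \in primes n).
by move: p_n; rewrite -logn_gt0 lt0n negbK => /eqP->; rewrite expn0 dvd1z.
Qed.

Lemma zhat_compat_le p k k' : prime p -> (k <= k')%N ->
  ((p ^ k)%N%:Z %| alpha p k' - alpha p k)%Z.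
Proof.
move=> p_pr; elim: k' => [|k' IHk]; first by rewrite leqn0 => /eqP->; rewrite subrr dvdz0.
rewrite leq_eqVlt ltnS => /predU1P[->|le_kk']; first by rewrite subrr dvdz0.
rewrite -(subrKA (alpha p k')) rpredD ?IHk //.
by apply: dvdz_trans (zhat_compat alpha k' p_pr); rewrite dvdzE /= dvdn_exp2l.
Qed.

Lemma zhat_cong_dvdl d n m : (0 < n)%N -> (d %| n)%N -> zhat_cong n m -> zhat_cong d m.
Proof.
move=> n_gt0 dvd_dn /zhat_congP cong_m; apply/zhat_congP => p p_pr.
have le_log := dvdn_leq_log p n_gt0 dvd_dn.
rewrite -(subrKA (alpha p (logn p n))) rpredD ?zhat_compat_le //.
by apply: dvdz_trans (cong_m p p_pr); rewrite dvdzE /= dvdn_exp2l.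
Qed.

Lemma zhat_cong_eqmod n m m' : (0 < n)%N -> zhat_cong n m -> zhat_cong n m' ->
  (n%:Z %| m - m')%Z.
Proof.
move=> n_gt0 /zhat_congP cong_m /zhat_congP cong_m'.
rewrite dvdzE; apply/(dvdn_partP _ n_gt0) => p; rewrite mem_primes p_part.
case/andP=> p_pr _; suff: ((p ^ logn p n)%N%:Z %| m - m')%Z by rewrite dvdzE.
by rewrite -(subrKA (alpha p (logn p n))) rpredD ?cong_m // -opprB rpredN cong_m'.
Qed.

Lemma zhat_cong_pfactor p k : prime p -> zhat_cong (p ^ k) (alpha p k).
Proof.
move=> p_pr; apply/zhat_congP => q q_pr.
have [-> | neq_qp] := eqVneq q p; first by rewrite pfactorK // subrr dvdz0.
by rewrite lognX logn_prime // (negPf neq_qp) muln0 expn0 dvd1z.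
Qed.

Lemma zhat_cong_coprime n1 n2 m1 m2 : (0 < n1)%N -> (0 < n2)%N -> coprime n1 n2 ->
  zhat_cong n1 m1 -> zhat_cong n2 m2 -> exists m, zhat_cong (n1 * n2) m.
Proof.
move=> n1_gt0 n2_gt0 co_n12 /zhat_congP cong_m1 /zhat_congP cong_m2.
have co_z : coprimez n1%:Z n2%:Z by rewrite coprimezE.
set m := zchinese n1%:Z n2%:Z m1 m2.
have mod_n1 : (n1%:Z %| m - m1)%Z by rewrite -eqz_mod_dvd zchinese_modl.
have mod_n2 : (n2%:Z %| m - m2)%Z by rewrite -eqz_mod_dvd zchinese_modr.
exists m; apply/zhat_congP => p p_pr; rewrite lognM //.
have [p_n1 | not_p_n1] := boolP (p %| n1)%N.
  rewrite (logn_coprime (coprime_dvdl p_n1 co_n12)) addn0 -(subrKA m1).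
  by rewrite rpredD ?cong_m1 // (dvdz_trans _ mod_n1) // dvdzE /= pfactor_dvdnn.
rewrite (logn_coprime (_ : coprime p n1)) ?prime_coprime // add0n -(subrKA m2).
by rewrite rpredD ?cong_m2 // (dvdz_trans _ mod_n2) // dvdzE /= pfactor_dvdnn.
Qed.

Lemma zhat_cong_exists n : exists m, zhat_cong n m.
Proof.
elim/ltn_ind: n => n IHn.
have [n_le1 | n_gt1] := leqP n 1.
  by exists 0; move: n_le1; rewrite leq_eqVlt ltnS leqn0 => /orP[] /eqP->.
have p_pr : prime (pdiv n) by rewrite pdiv_prime.
have n_gt0 : (0 < n)%N by apply: ltnW.
have [n' co_pn' def_n] := pfactor_coprime p_pr n_gt0.
have n'_gt0 : (0 < n')%N by move: n_gt0; rewrite def_n muln_gt0 => /andP[].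
have lt_n'n : (n' < n)%N.
  rewrite [in X in (_ < X)%N]def_n ltn_Pmulr // -[1%N](expn0 (pdiv n)) ltn_exp2l.
    by rewrite logn_gt0 mem_primes p_pr n_gt0 pdiv_dvd.
  exact: prime_gt1.
have [m' cong_m'] := IHn n' lt_n'n.
rewrite def_n; apply: zhat_cong_coprime cong_m' (zhat_cong_pfactor _ p_pr) => //.
by rewrite coprime_sym coprimeXl.
Qed.

Definition zhat_repr (n : nat) : int := xchoose (zhat_cong_exists n).

Lemma zhat_repr_cong n : zhat_cong n (zhat_repr n).
Proof. exact: xchooseP. Qed.

End ZhatResidues.

Section Subgroups.
Variables (A : zmodType) (S : A -> Prop).
Hypothesis S_subgroup : is_subgroup S.

Lemma subgroup0 : S 0.
Proof. exact: S_subgroup.1. Qed.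

Lemma subgroupB x y : S x -> S y -> S (x - y).
Proof. exact: S_subgroup.2. Qed.

Lemma subgroupN x : S x -> S (- x).
Proof. by move=> Sx; rewrite -sub0r; apply: subgroupB; first exact: subgroup0. Qed.

Lemma subgroupD x y : S x -> S y -> S (x + y).
Proof. by move=> Sx /subgroupN Sy; rewrite -[y]opprK; apply: subgroupB. Qed.

Lemma subgroupMz x k : S x -> S (x *~ k).
Proof.
have subgroupMn n : S x -> S (x *+ n).
  move=> Sx; elim: n => [|n IHn]; first by rewrite mulr0n; apply: subgroup0.
  by rewrite mulrS; apply: subgroupD.
case: k => n Sx; first by rewrite -pmulrn; apply: subgroupMn.
by rewrite NegzE mulrNz -pmulrn; apply/subgroupN/subgroupMn.
Qed.

End Subgroups.

Lemma zero_subgroup (A : zmodType) : is_subgroup (fun x : A => x = 0).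
Proof. by split => // x y -> ->; rewrite subr0. Qed.

Section MorphismKernelImage.
Variables (A B : zmodType) (f : A -> B).
Hypothesis fB : {morph f : x y / x - y}.

Lemma morph0 : f 0 = 0.
Proof. by rewrite -(subrr 0) fB subrr. Qed.

Lemma kernel_subgroup : is_subgroup (fun a => f a = 0).
Proof. by split=> [|x y fx0 fy0]; rewrite ?fB ?fx0 ?fy0 ?subr0 ?morph0. Qed.

Lemma image_subgroup : is_subgroup (fun x => exists a, x = f a).
Proof. by split=> [|_ _ [a ->] [b ->]]; [exists 0; rewrite morph0 | exists (a - b)]. Qed.

Lemma finite_index_kernel_image :
  finite_index (fun a => f a = 0) -> finite_pred (fun x => exists a, x = f a).
Proof.
move=> [s cover_s]; exists (map f s) => x; split=> [[a ->] | /mapP[b _ ->]].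
  have [b b_s fab0] := cover_s a.
  by move/eqP: fab0; rewrite fB subr_eq0 => /eqP->; rewrite map_f.
by exists b.
Qed.

Lemma finite_image_kernel_index (t : seq B) :
  (forall a, f a \in t) -> finite_index (fun a => f a = 0).
Proof.
move=> f_t.
have [s preim_s] : exists s : seq A,
    forall v, v \in t -> (exists a, f a = v) -> exists2 b, b \in s & f b = v.
  elim: t {f_t} => [|v t [s preim_s]]; first by exists [::].
  have [[a fa] | not_img] := classic (exists a, f a = v).
    exists (a :: s) => w.
    rewrite in_cons => /predU1P[-> _ | /preim_s w_s /w_s[b b_s fb]].
      by exists a; rewrite ?mem_head.
    by exists b; rewrite // in_cons b_s orbT.
  exists s => w; rewrite in_cons => /predU1P[-> // | ]; exact: preim_s.
exists s => a; have [b b_s fb] := preim_s _ (f_t a) (ex_intro _ a erefl).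
by exists b; rewrite // fB fb subrr.
Qed.

End MorphismKernelImage.

Section ZhatAction.
Variable A : zmodType.

Section Congruences.
Variable alpha : Zhat.

Lemma mulrz_zhat_cong_sub (a : A) n m m' : (0 < n)%N ->
  zhat_cong alpha n m -> zhat_cong alpha n m' -> exists q, a *~ m - a *~ m' = a *+ n *~ q.
Proof.
move=> n_gt0 cong_m cong_m'.
have /dvdzP[q def_mm'] := zhat_cong_eqmod n_gt0 cong_m cong_m'.
by exists q; rewrite -mulrzBr def_mm' mulrC mulrzA pmulrn.
Qed.

Lemma mulrz_zhat_cong_eq (a : A) n m m' : (0 < n)%N -> a *+ n = 0 ->
  zhat_cong alpha n m -> zhat_cong alpha n m' -> a *~ m = a *~ m'.
Proof.
move=> n_gt0 an0 cong_m cong_m'; apply/eqP; rewrite -subr_eq0.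
by have [q ->] := mulrz_zhat_cong_sub a n_gt0 cong_m cong_m'; rewrite an0 mul0rz.
Qed.

End Congruences.

Hypothesis A_periodic : periodic A.

Lemma periodic_exists (a : A) : exists n, (0 < n)%N && (a *+ n == 0).
Proof. by have [n [n_gt0 an0]] := A_periodic a; exists n; rewrite n_gt0 an0 eqxx. Qed.

Definition annihilator (a : A) : nat := xchoose (periodic_exists a).

Lemma annihilator_gt0 a : (0 < annihilator a)%N.
Proof. by case/andP: (xchooseP (periodic_exists a)). Qed.

Lemma mulrn_annihilator a : a *+ annihilator a = 0.
Proof. by case/andP: (xchooseP (periodic_exists a)) => _ /eqP. Qed.

Variable alpha : Zhat.

Definition zhat_scale (a : A) : A := a *~ zhat_repr alpha (annihilator a).

Lemma zhat_scaleE a n m : (0 < n)%N -> a *+ n = 0 -> zhat_cong alpha n m ->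
  zhat_scale a = a *~ m.
Proof.
move=> n_gt0 an0 cong_m; set N := (n * annihilator a)%N.
have N_gt0 : (0 < N)%N by rewrite muln_gt0 n_gt0 annihilator_gt0.
have cong_N := zhat_repr_cong alpha N.
have cong_n := zhat_cong_dvdl N_gt0 (dvdn_mulr _ (dvdnn n)) cong_N.
have cong_a := zhat_cong_dvdl N_gt0 (dvdn_mull _ (dvdnn (annihilator a))) cong_N.
rewrite (mulrz_zhat_cong_eq n_gt0 an0 cong_m cong_n).
exact: mulrz_zhat_cong_eq (annihilator_gt0 a) (mulrn_annihilator a)
  (zhat_repr_cong _ _) cong_a.
Qed.

Lemma zhat_scaleB : {morph zhat_scale : a b / a - b}.
Proof.
move=> a b; set N := (annihilator a * annihilator b)%N.
have N_gt0 : (0 < N)%N by rewrite muln_gt0 !annihilator_gt0.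
have aN0 : a *+ N = 0 by rewrite mulrnA mulrn_annihilator mul0rn.
have bN0 : b *+ N = 0 by rewrite /N mulnC mulrnA mulrn_annihilator mul0rn.
have abN0 : (a - b) *+ N = 0 by rewrite mulrnBl aN0 bN0 subrr.
by rewrite !(zhat_scaleE N_gt0 _ (zhat_repr_cong _ _)) // mulrzBl.
Qed.

Lemma zhat_scale_additive (phi : {additive A -> A}) a :
  zhat_scale (phi a) = phi (zhat_scale a).
Proof.
rewrite raddfMz (zhat_scaleE (annihilator_gt0 a) _ (zhat_repr_cong _ _)) //.
by rewrite -raddfMn mulrn_annihilator raddf0.
Qed.

Lemma mult_modP (B : A -> Prop) : is_subgroup B ->
  forall a b, mult_mod B alpha a b <-> B (b - zhat_scale a).
Proof.
move=> B_subgroup a b; split=> [[n [n_gt0 [B_an [m [/zhat_congP cong_m B_bm]]]]] | B_ba].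
  set N := (n * annihilator a)%N.
  have N_gt0 : (0 < N)%N by rewrite muln_gt0 n_gt0 annihilator_gt0.
  have aN0 : a *+ N = 0 by rewrite /N mulnC mulrnA mulrn_annihilator mul0rn.
  have cong_n := zhat_cong_dvdl N_gt0 (dvdn_mulr _ (dvdnn n)) (zhat_repr_cong alpha N).
  have [q def_mm] := mulrz_zhat_cong_sub a n_gt0 cong_m cong_n.
  rewrite (zhat_scaleE N_gt0 aN0 (zhat_repr_cong _ _)) -(subrKA (a *~ m)) def_mm.
  by apply: subgroupD => //; apply: subgroupMz.
exists (annihilator a); split; first exact: annihilator_gt0.
split; first by rewrite mulrn_annihilator; apply: subgroup0.
exists (zhat_repr alpha (annihilator a)).
by split; first exact/zhat_congP/zhat_repr_cong.
Qed.

Lemma mult_mod0P a b : mult_mod (fun x => x = 0) alpha a b <-> b = zhat_scale a.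
Proof.
split=> [/(mult_modP (zero_subgroup A))/eqP | ->]; first by rewrite subr_eq0 => /eqP.
by apply/(mult_modP (zero_subgroup A)); rewrite subrr.
Qed.

Variable phi : {additive A -> A}.

Definition mult_defect (a : A) : A := phi a - zhat_scale a.

Lemma mult_defectB : {morph mult_defect : a b / a - b}.
Proof. by move=> a b; rewrite /mult_defect raddfB zhat_scaleB opprD addrACA -opprD. Qed.

Lemma mult_defect_comm a : mult_defect (phi a) = phi (mult_defect a).
Proof. by rewrite /mult_defect zhat_scale_additive raddfB. Qed.

End ZhatAction.

Theorem proposition2p4 (A : zmodType) (phi : {additive A -> A}) :
  periodic A ->
  ((exists A0 : A -> Prop,
       is_subgroup A0 /\ finite_index A0 /\ acts_as_mult phi A0)
   <->
   (exists A1 : A -> Prop,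
       is_subgroup A1 /\ finite_pred A1 /\ (forall x, A1 x -> A1 (phi x)) /\
       induces_mult_quot phi A1)).
Proof.
move=> A_periodic; split.
- move=> [A0 [_ [[s cover_s] [alpha act_A0]]]].
  have defect_B := mult_defectB A_periodic alpha phi.
  exists (fun x => exists a, x = mult_defect A_periodic alpha phi a).
  split; first exact: image_subgroup.
  split.
    apply: finite_index_kernel_image defect_B _; exists s => a.
    have [b b_s /act_A0/(mult_mod0P A_periodic) phi_ab] := cover_s a.
    by exists b; rewrite // /mult_defect -phi_ab subrr.
  split; first by move=> _ [a ->]; exists (phi a); rewrite mult_defect_comm.
  exists alpha => a; apply/(mult_modP _ _ (image_subgroup defect_B)).
  by exists a.
-
  move=> [A1 [A1_subgroup [[t A1_t] [_ [alpha ind_A1]]]]].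
  have defect_B := mult_defectB A_periodic alpha phi.
  exists (fun a => mult_defect A_periodic alpha phi a = 0).
  split; first exact: kernel_subgroup.
  split.
    apply: (finite_image_kernel_index defect_B (t := t)) => a; apply/A1_t.
    exact/(mult_modP _ _ A1_subgroup).
  exists alpha => a /eqP; rewrite subr_eq0 => /eqP def_phia.
  exact/(mult_mod0P A_periodic).
Qed.
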